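(* Let $a,b\in[0,1]$ with $a\le b$. For $p,\tilde p\in[0,1]$ define the relative error \[ e_{\mathrm{rel}}(p,\tilde p):=\frac{|p-\tilde p|}{\min(p,1-p)}, \] with the conventions $\frac{0}{0}:=0$ and $\frac{x}{0}:=\infty$ for $x>0$; for $\tilde p\in[a,b]$ define $e_{\mathrm{rel}}([a,b],\tilde p):=\max_{p\in[a,b]}e_{\mathrm{rel}}(p,\tilde p)$, and define $e_{\mathrm{rel}}([a,b]):=\min_{\tilde p\in[a,b]}e_{\mathrm{rel}}([a,b],\tilde p)$. (i) If $a,b\in[0,1/2]$, then for all $\tilde p\in[a,b]$, \[ e_{\mathrm{rel}}([a,b],\tilde p)\ \ge\ e_{\mathrm{rel}}\Big([a,b],\frac{2ab}{a+b}\Big)=\frac{b-a}{b+a}, \] and hence $e_{\mathrm{rel}}([a,b])=\frac{b-a}{b+a}$. (ii) If $a,b\in[1/2,1]$, then for all $\tilde p\in[a,b]$, \[ e_{\mathrm{rel}}([a,b],\tilde p)\ \ge\ e_{\mathrm{rel}}\Big([a,b],\frac{a+b-2ab}{2-a-b}\Big)=\frac{b-a}{2-a-b}, \] and hence $e_{\mathrm{rel}}([a,b])=\frac{b-a}{2-a-b}$.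
   Context: Here $e_{\mathrm{rel}}([a,b],\tilde p)$ is the worst-case relative error of approximating an unknown probability known to lie in $[a,b]$ by $\tilde p$, and $e_{\mathrm{rel}}([a,b])$ is the best achievable such error. The conventions $\frac00:=0$ and $\frac x0:=\infty$ ($x>0$) also apply to the displayed fractions (e.g. when $a=b=0$ or $a=b=1$). *)

From HB Require Import structures.
From mathcomp Require Import all_boot all_order all_algebra.
From mathcomp Require Import all_classical all_reals ereal.
Set Implicit Arguments. Unset Strict Implicit. Unset Printing Implicit Defensive.
Import Order.TTheory GRing.Theory Num.Theory.
Local Open Scope ring_scope.
Local Open Scope classical_set_scope.

Definition erel (R : realType) (p pt : R) : \bar R :=
  let d := Num.min p (1 - p) in
  if d == 0 then (if `|p - pt| == 0 then 0%E else +oo%E)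
  else (`|p - pt| / d)%:E.

Definition erel_int (R : realType) (a b pt : R) : \bar R :=
  ereal_sup [set erel p pt | p in [set p : R | a <= p <= b]].

Definition erel_opt (R : realType) (a b : R) : \bar R :=
  ereal_inf [set erel_int a b pt | pt in [set pt : R | a <= pt <= b]].

From HB Require Import structures.
From mathcomp Require Import all_boot all_order all_algebra.
From mathcomp Require Import all_classical all_reals ereal.
From mathcomp Require Import ring lra.
Import Order.TTheory GRing.Theory Num.Theory.
Local Open Scope ring_scope.
Local Open Scope classical_set_scope.

(* For [a, b] inside [0, 1/2] the relative error is |p - pt| / p, which for a
   fixed pt is largest at an endpoint of [a, b].  The harmonic mean
   pt = 2ab/(a+b) balances the two endpoints: both have error (b - a)/(b + a).
   Any other pt has a larger relative distance to a or to b, hence a larger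
   worst-case error.  The case [a, b] inside [1/2, 1] is the image of the first
   under p |-> 1 - p, which preserves the relative error. *)

Section RelativeError.
Context {R : realType}.
Implicit Types a b p pt : R.

Lemma erel_lower_half p pt : 0 < p -> p <= 1/2 -> erel p pt = (`|p - pt| / p)%:E.
Proof. by move=> p_gt0 p_le; rewrite /erel min_l ?gt_eqF //; lra. Qed.

Lemma erel0 pt : erel 0 pt = (if pt == 0 then 0%E else +oo%E).
Proof. by rewrite /erel min_l ?eqxx ?sub0r ?normrN ?normr_eq0 //; lra. Qed.

Lemma erelC p pt : erel (1 - p) (1 - pt) = erel p pt.
Proof.
rewrite /erel subKr.
have -> : 1 - p - (1 - pt) = - (p - pt) by ring.
by rewrite normrN minC.
Qed.

Lemma image_itv_reflect {T : Type} (f : R -> T) a b :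
  [set f p | p in [set p | a <= p <= b]] =
  [set f (1 - q) | q in [set q | 1 - b <= q <= 1 - a]].
Proof.
apply/seteqP; split=> _ [p /andP[p_ge p_le] <-]; exists (1 - p).
- by rewrite /= lerB // ?lerB.
- by rewrite subKr.
- by rewrite /=; apply/andP; split; lra.
- by [].
Qed.

Lemma erel_intC a b pt : erel_int a b pt = erel_int (1 - b) (1 - a) (1 - pt).
Proof.
rewrite /erel_int (image_itv_reflect (fun p => erel p pt)); congr ereal_sup.
by apply: eq_imagel => q _; rewrite -[LHS]erelC subKr.
Qed.

Lemma erel_optC a b : erel_opt a b = erel_opt (1 - b) (1 - a).
Proof.
rewrite /erel_opt (image_itv_reflect (erel_int a b)).
by congr ereal_inf; apply: eq_imagel => q _; rewrite erel_intC subKr.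
Qed.

Lemma erel_le_erel_int a b p pt : a <= p <= b -> (erel p pt <= erel_int a b pt)%E.
Proof. by move=> p_ab; apply: ereal_sup_ubound; exists p. Qed.

Lemma erel_opt_eq a b pt0 x : a <= pt0 <= b -> erel_int a b pt0 = x ->
  (forall pt, a <= pt <= b -> (x <= erel_int a b pt)%E) -> erel_opt a b = x.
Proof.
move=> pt0_ab <- lb; apply/eqP; rewrite eq_le; apply/andP; split.
  by apply: ereal_inf_lbound; exists pt0.
by apply: le_ereal_inf_tmp => _ [pt pt_ab <-]; apply: lb.
Qed.

Section LowerHalf.
Context {a b : R}.

Let hm := 2 * a * b / (a + b).
Let c := (b - a) / (b + a).

Lemma harmonic_mean_in_itv (a_ge0 : 0 <= a) (a_le_b : a <= b) : a <= hm <= b.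
Proof.
have [ab0|ab_neq0] := eqVneq (a + b) 0.
  have a0 : a = 0 by lra.
  have b0 : b = 0 by lra.
  by rewrite /hm a0 b0 !mulr0 !mul0r lexx.
have ab_gt0 : 0 < a + b by rewrite lt_def ab_neq0 /=; lra.
by rewrite /hm ler_pdivlMr // ler_pdivrMr //; apply/andP; split; nra.
Qed.

Lemma erel_harmonic_mean_le
    (a_ge0 : 0 <= a) (a_le_b : a <= b) (b_le_half : b <= 1/2) p :
  a <= p <= b -> (erel p hm <= c%:E)%E.
Proof.
move=> /andP[a_le_p p_le_b].
have [p0|p_neq0] := eqVneq p 0.
  have a0 : a = 0 by lra.
  rewrite p0 /hm /c a0 erel0 !mulr0 !mul0r eqxx lee_fin subr0 addr0.
  by have [->|b_neq0] := eqVneq b 0; rewrite ?mul0r ?divff.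
have p_gt0 : 0 < p by rewrite lt_def p_neq0 /=; lra.
have ab_gt0 : 0 < a + b by lra.
rewrite erel_lower_half; [|lra|lra]; rewrite lee_fin ler_pdivrMr //.
have hm_def : hm * (a + b) = 2 * a * b by rewrite /hm divfK // gt_eqF.
have c_def : c * (b + a) = b - a by rewrite /c divfK // gt_eqF // addrC.
have cp_def : c * p * (a + b) = (b - a) * p by rewrite -c_def; ring.
clearbody hm c.
by rewrite ler_norml; apply/andP; split; nra.
Qed.

Lemma erel_harmonic_mean_at_b
    (a_ge0 : 0 <= a) (a_le_b : a <= b) (b_le_half : b <= 1/2) :
  erel b hm = c%:E.
Proof.
have [b0|b_neq0] := eqVneq b 0.
  have a0 : a = 0 by lra.
  by rewrite /hm /c b0 a0 erel0 !(mulr0, mul0r, subr0, addr0) eqxx.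
have b_gt0 : 0 < b by rewrite lt_def b_neq0 /=; lra.
have /andP[_ hm_le_b] := harmonic_mean_in_itv a_ge0 a_le_b.
rewrite erel_lower_half //; congr EFin; rewrite ger0_norm ?subr_ge0 // /hm /c.
by field; apply/andP; split; rewrite gt_eqF //; lra.
Qed.

Lemma erel_at_endpoint_ge
    (a_ge0 : 0 <= a) (a_le_b : a <= b) (b_le_half : b <= 1/2) pt :
  a <= pt <= b -> exists2 p, a <= p <= b & (c%:E <= erel p pt)%E.
Proof.
move=> /andP[a_le_pt pt_le_b].
have a_ab : a <= a <= b by rewrite lexx a_le_b.
have b_ab : a <= b <= b by rewrite lexx a_le_b.
have [a0|a_neq0] := eqVneq a 0.
  have [pt0|pt_neq0] := eqVneq pt 0; last first.
    by exists a => //; rewrite a0 erel0 (negbTE pt_neq0) leey.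
  exists b => //; rewrite /c a0 pt0 subr0 addr0.
  have [b0|b_neq0] := eqVneq b 0; first by rewrite b0 erel0 eqxx mul0r.
  by rewrite erel_lower_half ?subr0 ?ger0_norm //; [lra|rewrite lt_def b_neq0 /=; lra].
have a_gt0 : 0 < a by rewrite lt_def a_neq0 /=; lra.
have c_def : c * (b + a) = b - a by rewrite /c divfK // gt_eqF //; lra.
have [far_from_a|near_a] := lerP (c * a) (pt - a).
  exists a => //; rewrite erel_lower_half; [|lra|lra].
  by rewrite lee_fin ler_pdivlMr // distrC ger0_norm; lra.
exists b => //; rewrite erel_lower_half; [|lra|lra].
rewrite lee_fin ler_pdivlMr ?ger0_norm; [|lra|lra].
by clearbody c; nra.
Qed.

Lemma erel_int_harmonic_mean
    (a_ge0 : 0 <= a) (a_le_b : a <= b) (b_le_half : b <= 1/2) :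
  erel_int a b hm = c%:E.
Proof.
apply/eqP; rewrite eq_le; apply/andP; split.
  by apply: ge_ereal_sup => _ [p p_ab <-]; apply: erel_harmonic_mean_le.
rewrite -erel_harmonic_mean_at_b //.
by apply: erel_le_erel_int; rewrite lexx a_le_b.
Qed.

Lemma erel_int_ge
    (a_ge0 : 0 <= a) (a_le_b : a <= b) (b_le_half : b <= 1/2) pt :
  a <= pt <= b -> (c%:E <= erel_int a b pt)%E.
Proof.
move=> /(erel_at_endpoint_ge a_ge0 a_le_b b_le_half)[p p_ab c_le].
by apply: le_trans c_le _; apply: erel_le_erel_int.
Qed.

Lemma erel_opt_lower_half
    (a_ge0 : 0 <= a) (a_le_b : a <= b) (b_le_half : b <= 1/2) :
  erel_opt a b = c%:E.
Proof.
apply: erel_opt_eq (harmonic_mean_in_itv _ _) (erel_int_harmonic_mean _ _ _) _ => //.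
exact: erel_int_ge.
Qed.

End LowerHalf.
End RelativeError.

Theorem mainTheorem2 (R : realType) (a b : R) :
  0 <= a -> a <= b -> b <= 1 ->
  (b <= 1/2 ->
     (forall pt : R, a <= pt <= b ->
        (erel_int a b (2 * a * b / (a + b)) <= erel_int a b pt)%E) /\
     erel_int a b (2 * a * b / (a + b)) = ((b - a) / (b + a))%:E /\
     erel_opt a b = ((b - a) / (b + a))%:E) /\
  (1/2 <= a ->
     (forall pt : R, a <= pt <= b ->
        (erel_int a b (1 - 2 * (1 - a) * (1 - b) / ((1 - a) + (1 - b)))
           <= erel_int a b pt)%E) /\
     erel_int a b (1 - 2 * (1 - a) * (1 - b) / ((1 - a) + (1 - b)))
       = ((b - a) / (2 - a - b))%:E /\
     erel_opt a b = ((b - a) / (2 - a - b))%:E).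
Proof.
move=> a_ge0 a_le_b b_le1; split=> [b_le_half|half_le_a].
  have hm_opt := erel_int_harmonic_mean a_ge0 a_le_b b_le_half.
  split; last by rewrite hm_opt erel_opt_lower_half.
  by move=> pt pt_ab; rewrite hm_opt; apply: erel_int_ge.
have b'_ge0 : 0 <= 1 - b by lra.
have b'_le_a' : 1 - b <= 1 - a by lra.
have a'_le_half : 1 - a <= 1/2 by lra.
have c_eq : (1 - a - (1 - b)) / (1 - a + (1 - b)) = (b - a) / (2 - a - b).
  by congr (_ / _); ring.
set hm := 2 * (1 - a) * (1 - b) / (1 - a + (1 - b)).
have hmC : 2 * (1 - b) * (1 - a) / (1 - b + (1 - a)) = hm.
  by rewrite /hm [2 * _ * (1 - a)]mulrAC [1 - b + _]addrC.
have hm_opt : erel_int a b (1 - hm) = ((b - a) / (2 - a - b))%:E.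
  by rewrite erel_intC subKr -hmC erel_int_harmonic_mean // c_eq.
split; last by rewrite hm_opt erel_optC erel_opt_lower_half // c_eq.
move=> pt /andP[a_le_pt pt_le_b]; rewrite hm_opt -c_eq erel_intC.
by apply: erel_int_ge => //; apply/andP; split; lra.
Qed.
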